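(* Let $A=(a_0,\dots,a_{n-1})$ be an integer array with $|a_m-a_{m+1}|=1$ for all $0\le m<n-1$. Let $0\le k\le i<n$ and $x\in\mathbb{Z}$ satisfy $i-a_i+x<k\le i$. Then $\mathrm{FS}_A(k,x)=\mathrm{FS}_A(i,x)$.
   Context: For an integer array $A=(a_0,\dots,a_{n-1})$, $\mathrm{FS}_A(i,x)$, for $0\le i<n$ and $x\in\mathbb{Z}$, denotes the minimal index $j>i$ such that $a_j\le x$, and is $0$ if no such $j$ exists. *)

From Stdlib Require Import ZArith Arith Lia.
Open Scope Z_scope.

(* An integer array A = (a_0,...,a_{n-1}) is represented by its length n and
   a function a : nat -> Z (values at indices >= n are irrelevant). *)

Fixpoint fs_search (a : nat -> Z) (fuel j : nat) (x : Z) : nat :=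
  match fuel with
  | O => 0%nat
  | S f => if Z.leb (a j) x then j else fs_search a f (S j) x
  end.

(* FS_A(i,x): minimal index j > i (j < n) with a_j <= x, and 0 if none. *)
Definition FS (a : nat -> Z) (n i : nat) (x : Z) : nat :=
  fs_search a (n - S i) (S i) x.

Definition FS_spec (a : nat -> Z) (n i : nat) (x : Z) (j : nat) : Prop :=
  ((i < j < n)%nat /\ a j <= x /\ forall m, (i < m < j)%nat -> x < a m)
  \/ (j = 0%nat /\ forall m, (i < m < n)%nat -> x < a m).

From Stdlib Require Import ZArith Arith Lia.
Open Scope Z_scope.

(* The array can drop by at most 1 per step, so every entry a_m with
   k < m <= i satisfies a_m >= a_i - (i - m) > a_i - i + k > x: no index
   strictly between k and i+1 qualifies, and the searches from k and i agree. *)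

Lemma ge_sub_dist_of_step_le1 (a : nat -> Z) (n : nat)
  (Hstep : forall m : nat, (m + 1 < n)%nat -> Z.abs (a m - a (m + 1)%nat) <= 1)
  (m i : nat) :
  (m <= i)%nat -> (i < n)%nat -> a i - Z.of_nat (i - m) <= a m.
Proof.
  induction m as [m IH] using (well_founded_induction (Nat.gt_wf i)).
  intros Hmi Hin.
  destruct (Nat.eq_dec m i) as [-> | Hne]; [rewrite Nat.sub_diag; lia|].
  pose proof (IH (S m) ltac:(lia) ltac:(lia) Hin) as Hnext.
  pose proof (Hstep m ltac:(lia)) as Hm.
  rewrite Nat.add_1_r in Hm.
  lia.
Qed.

Lemma FS_succ_above (a : nat -> Z) (n k : nat) (x : Z) :
  (S k < n)%nat -> x < a (S k) -> FS a n k x = FS a n (S k) x.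
Proof.
  intros Hkn Hx; unfold FS.
  replace (n - S k)%nat with (S (n - S (S k))) by lia; simpl.
  now destruct (Z.leb_spec (a (S k)) x); [lia|].
Qed.

Lemma FS_skip_above (a : nat -> Z) (n i : nat) (x : Z) (Hin : (i < n)%nat) :
  forall k, (k <= i)%nat -> (forall m, (k < m <= i)%nat -> x < a m) ->
  FS a n k x = FS a n i x.
Proof.
  induction k as [k IH] using (well_founded_induction (Nat.gt_wf i)).
  intros Hki Habove.
  destruct (Nat.eq_dec k i) as [-> | Hne]; [reflexivity|].
  rewrite FS_succ_above by (try apply Habove; lia).
  apply IH; [lia | lia | intros m Hm; apply Habove; lia].
Qed.

Theorem claim2 (a : nat -> Z) (n : nat)
  (Hstep : forall m : nat, (m + 1 < n)%nat -> Z.abs (a m - a (m + 1)%nat) = 1)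
  (k i : nat) (x : Z)
  (Hki : (k <= i)%nat) (Hin : (i < n)%nat)
  (Hcond : Z.of_nat i - a i + x < Z.of_nat k) :
  FS a n k x = FS a n i x.
Proof.
  apply FS_skip_above; [exact Hin | exact Hki |].
  intros m Hm.
  assert (Hstep_le1 : forall m, (m + 1 < n)%nat -> Z.abs (a m - a (m + 1)%nat) <= 1)
    by (intros; rewrite Hstep; lia).
  pose proof (ge_sub_dist_of_step_le1 a n Hstep_le1 m i ltac:(lia) Hin) as Hbound.
  rewrite Nat2Z.inj_sub in Hbound by lia.
  lia.
Qed.
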